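(* Let $D$ be an integral domain with quotient field $K$, $T$ an overring of $D$, $\star$ a semistar operation on $D$ and $\star'$ a semistar operation on $T$. The following are equivalent: (i) $T$ is $(\star,\star')$-linked to $D$; (ii) $\mathrm{Na}(D,\star)\subseteq\mathrm{Na}(T,\star')$; (iii) $\tilde\star\le(\widetilde{\star'})_D$, i.e. $E^{\tilde\star}\subseteq (ET)^{\widetilde{\star'}}$ for every $E\in\overline{\mathbf F}(D)$; (iv) $T$ is $(\tilde\star,\widetilde{\star'})$-linked to $D$; (v) $T^{\widetilde{\star'}}$ is an overring of $D^{\tilde\star}$ which is $(\dot{\tilde\star},\dot{\widetilde{\star'}})$-linked to $D^{\tilde\star}$.
   Context: Let $D$ be an integral domain with quotient field $K$. $\overline{\mathbf F}(D)$ denotes the set of all nonzero $D$-submodules of $K$ and $\mathbf f(D)$ the set of nonzero finitely generated $D$-submodules of $K$. A semistar operation on $D$ is a map $\star:\overline{\mathbf F}(D)\to\overline{\mathbf F}(D)$, $E\mapsto E^\star$, such that for all $0\ne x\in K$ and $E,F\in\overline{\mathbf F}(D)$: (1) $(xE)^\star=xE^\star$; (2) $E\subseteq F\Rightarrow E^\star\subseteq F^\star$; (3) $E\subseteq E^\star$ and $(E^\star)^\star=E^\star$. $\star_f$ is defined by $E^{\star_f}=\bigcup\{F^\star:F\in\mathbf f(D),F\subseteq E\}$. A nonzero ideal $I$ of $D$ is a quasi-$\star$-ideal if $I^\star\cap D=I$; a quasi-$\star$-maximal ideal is a maximal element among proper quasi-$\star$-ideals; $\mathcal M(\star_f)$ is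 the set of quasi-$\star_f$-maximal ideals of $D$, and $\tilde\star$ is the semistar operation $E^{\tilde\star}=\bigcap\{ED_Q:Q\in\mathcal M(\star_f)\}$ (equal to $K$ if $\mathcal M(\star_f)=\emptyset$). An overring of $D$ is a ring $T$ with $D\subseteq T\subseteq K$; all notions are defined analogously on $T$. For a semistar operation $\star$ on $D$, $\dot\star$ denotes the semistar operation $E\mapsto E^\star$ on the ring $D^\star$; similarly $\dot{\tilde\star}$ is $E\mapsto E^{\tilde\star}$ on $D^{\tilde\star}$ and $\dot{\widetilde{\star'}}$ is $E\mapsto E^{\widetilde{\star'}}$ on $T^{\widetilde{\star'}}$. $T$ is $(\star,\star')$-linked to $D$ if for every nonzero finitely generated ideal $F\subseteq D$ with $F^\star=D^\star$ one has $(FT)^{\star'}=T^{\star'}$. For $f\in D[X]$, $c(f)$ is its content; $\mathrm{Na}(D,\star):=D[X]_{N_D(\star)}$ with $N_D(\star)=\{h\in D[X]:h\ne0,\ c(h)^\star=D^\star\}$, and $\mathrm{Na}(T,\star')$ is defined analogously. *)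

From HB Require Import structures.
From mathcomp Require Import all_boot all_order all_algebra.
From mathcomp Require Import boolp classical_sets.
Set Implicit Arguments. Unset Strict Implicit. Unset Printing Implicit Defensive.
Import Order.TTheory GRing.Theory Num.Theory.
Local Open Scope ring_scope.
Local Open Scope classical_set_scope.

Section Semistar.
Variable K : fieldType.

(* R is a subring of K (containing 1); a subring of a field is a domain *)
Definition subring (R : set K) : Prop :=
  R 1 /\ (forall x y, R x -> R y -> R (x - y)) /\ (forall x y, R x -> R y -> R (x * y)).

Definition is_quotient_field (R : set K) : Prop :=
  forall x : K, exists a b, R a /\ R b /\ b != 0 /\ x = a / b.

Definition overring (R T : set K) : Prop := subring T /\ R `<=` T.

Definition submod (R E : set K) : Prop :=
  E 0 /\ (forall x y, E x -> E y -> E (x + y)) /\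
  (forall r x, R r -> E x -> E (r * x)).

Definition Fbar (R E : set K) : Prop := submod R E /\ exists x, x != 0 /\ E x.

Definition gen (R : set K) (s : seq K) : set K :=
  [set x | exists c : seq K, size c = size s /\
     (forall i, (i < size c)%N -> R c`_i) /\
     x = \sum_(i < size s) c`_i * s`_i].

Definition fg (R E : set K) : Prop := Fbar R E /\ exists s : seq K, E = gen R s.

Definition smul (x : K) (E : set K) : set K := (fun y => x * y) @` E.

Definition semistar (R : set K) (st : set K -> set K) : Prop :=
  (forall E, Fbar R E -> Fbar R (st E)) /\
  (forall x E, x != 0 -> Fbar R E -> st (smul x E) = smul x (st E)) /\
  (forall E F, Fbar R E -> Fbar R F -> E `<=` F -> st E `<=` st F) /\
  (forall E, Fbar R E -> E `<=` st E /\ st (st E) = st E).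

Definition star_f (R : set K) (st : set K -> set K) : set K -> set K :=
  fun E => [set x | exists F, fg R F /\ F `<=` E /\ st F x].

Definition qideal (R : set K) (st : set K -> set K) (I : set K) : Prop :=
  Fbar R I /\ I `<=` R /\ st I `&` R = I.

Definition qmax (R : set K) (st : set K -> set K) (Q : set K) : Prop :=
  qideal R st Q /\ ~ (R `<=` Q) /\
  (forall I, qideal R st I -> ~ (R `<=` I) -> Q `<=` I -> I = Q).

Definition locmod (R Q E : set K) : set K :=
  [set x | exists e s, E e /\ R s /\ ~ Q s /\ s != 0 /\ x = e / s].

(* tilde star: E |-> \bigcap_{Q in M(star_f)} E R_Q  (= K if M(star_f) is empty) *)
Definition stilde (R : set K) (st : set K -> set K) : set K -> set K :=
  fun E => [set x | forall Q, qmax R (star_f R st) Q -> locmod R Q E x].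

Definition prodmod (E T : set K) : set K :=
  [set x | exists es ts : seq K, size es = size ts /\
     (forall i, (i < size es)%N -> E es`_i) /\
     (forall i, (i < size ts)%N -> T ts`_i) /\
     x = \sum_(i < size es) es`_i * ts`_i].

Definition linked (R T : set K) (st st' : set K -> set K) : Prop :=
  forall F, fg R F -> F `<=` R -> st F = st R -> st' (prodmod F T) = st' T.

Definition polyR (R : set K) (p : {poly K}) : Prop := forall i, R p`_i.

Definition content (R : set K) (h : {poly K}) : set K := gen R (polyseq h).

(* Na(R, st) = R[X]_{N_R(st)} as a subring of K(X) *)
Definition Na (R : set K) (st : set K -> set K) : set {fraction {poly K}} :=
  [set z | exists f g : {poly K}, polyR R f /\ polyR R g /\ g != 0 /\
     st (content R g) = st R /\ z = (tofrac f) / (tofrac g)].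

End Semistar.

From HB Require Import structures.
From mathcomp Require Import all_boot all_order all_algebra.
From mathcomp Require Import boolp classical_sets.
From mathcomp Require Import ring.
Set Implicit Arguments. Unset Strict Implicit. Unset Printing Implicit Defensive.
Import GRing.Theory.
Local Open Scope ring_scope.
Local Open Scope classical_set_scope.

(* Quasi-star_f-maximal ideals are prime, and by Zorn's lemma every nonzero ideal [I] with
   [1 \notin I^{star_f}] lies in one.  Hence for a finitely generated ideal [G] of [D]:
   [G^star = D^star] iff [1 \in G^{stilde}] iff [G^{stilde} = D^{stilde}], and
   [x \in E^{stilde}] iff [G x \subseteq E] for some such [G].  All five conditions thereby
   become the single statement "[1 \in F^{stilde}] implies [1 \in (FT)^{stilde'}] for every
   finitely generated [F \subseteq D]": the [Na] inclusion is this statement for contents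
   [F = c(g)] (and every [F] is a content), while passing to [D^{stilde} \subseteq T^{stilde'}]
   only replaces [F] by [F D^{stilde}]. *)

Section Modules.
Variable K : fieldType.
Implicit Types (R T E M : set K) (s : seq K).

Lemma subring1 R : subring R -> R 1. Proof. by case. Qed.

Lemma subring0 R : subring R -> R 0.
Proof. by move=> [h1 [hB _]]; rewrite -(subrr 1); apply: hB. Qed.

Lemma subringN R x : subring R -> R x -> R (- x).
Proof. by move=> hR hx; rewrite -sub0r; apply: hR.2.1 => //; apply: subring0. Qed.

Lemma subringD R x y : subring R -> R x -> R y -> R (x + y).
Proof. by move=> hR hx hy; rewrite -(opprK y); apply: hR.2.1 => //; apply: subringN. Qed.

Lemma subringM R x y : subring R -> R x -> R y -> R (x * y).
Proof. by move=> hR; apply: hR.2.2. Qed.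

Lemma submod0 R M : submod R M -> M 0. Proof. by case. Qed.

Lemma submodD R M x y : submod R M -> M x -> M y -> M (x + y).
Proof. by move=> [_ [h _]]; apply: h. Qed.

Lemma submodM R M r x : submod R M -> R r -> M x -> M (r * x).
Proof. by move=> [_ [_ h]]; apply: h. Qed.

Lemma submodW R R' M : submod R M -> R' `<=` R -> submod R' M.
Proof. by move=> [h0 [hD hM]] hR; split=> //; split=> // r x /hR; apply: hM. Qed.

Lemma submodI R A B : submod R A -> submod R B -> submod R (A `&` B).
Proof.
move=> hA hB; split; first by split; [exact: submod0 hA|exact: submod0 hB].
split; first by move=> x y [? ?] [? ?]; split; [exact: submodD hA _ _|exact: submodD hB _ _].
by move=> r x hr [? ?]; split; [exact: submodM hA _ _|exact: submodM hB _ _].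
Qed.

Lemma subring_submod R : subring R -> submod R R.
Proof. by move=> hR; split; [exact: subring0|split=> *; [exact: subringD|exact: subringM]]. Qed.

Lemma submod_1 R M : submod R M -> M 1 -> R `<=` M.
Proof. by move=> hM h1 r hr; rewrite -[r]mulr1; apply: (submodM hM). Qed.

Definition adjoin R M a := [set x | exists m r, M m /\ R r /\ x = m + r * a].

Lemma adjoin_submod R M a : subring R -> submod R M -> submod R (adjoin R M a).
Proof.
move=> hR hM; split.
  by exists 0, 0; split; [exact: submod0 hM|split; [exact: subring0|rewrite mul0r addr0]].
split.
  move=> _ _ [m [r [hm [hr ->]]]] [m' [r' [hm' [hr' ->]]]].
  exists (m + m'), (r + r'); split; first exact: submodD hM _ _.
  by split; [exact: subringD|rewrite mulrDl addrACA].
move=> c _ hc [m [r [hm [hr ->]]]]; exists (c * m), (c * r).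
split; first exact: submodM hM _ _.
by split; [exact: subringM|rewrite mulrDr mulrA].
Qed.

Lemma adjoin_ext R M a : subring R -> M `<=` adjoin R M a.
Proof. by move=> hR m hm; exists m, 0; split=> //; split; [exact: subring0|rewrite mul0r addr0]. Qed.

Lemma adjoin_mem R M a : subring R -> submod R M -> adjoin R M a a.
Proof.
by move=> hR hM; exists 0, 1; split; [exact: submod0 hM|split; [exact: subring1|rewrite mul1r add0r]].
Qed.

Lemma adjoin_sub R M a : subring R -> M `<=` R -> R a -> adjoin R M a `<=` R.
Proof. by move=> hR hMR ha _ [m [r [hm [hr ->]]]]; apply: subringD => //; [exact: hMR|exact: subringM]. Qed.

Lemma gen_nil R x : gen R [::] x <-> x = 0.
Proof.
split; first by move=> [c [_ [_ ->]]]; rewrite big_ord0.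
by move=> ->; exists [::]; split=> //; split=> //; rewrite big_ord0.
Qed.

Lemma gen_cons R a s x :
  gen R (a :: s) x <-> exists r y, R r /\ gen R s y /\ x = r * a + y.
Proof.
split.
  move=> [[|r c] [//= [hs] [hc ->]]].
  exists r, (\sum_(i < size s) c`_i * s`_i); split; first exact: (hc 0%N).
  split; last by rewrite big_ord_recl.
  exists c; split=> //; split=> // i hi; exact: (hc i.+1).
move=> [r [y [hr [[c [hs [hc ->]]] ->]]]].
exists (r :: c); split; first by rewrite /= hs.
split; first by case=> //= i hi; apply: hc.
by rewrite /= big_ord_recl.
Qed.

Lemma gen_ind R s (P : K -> Prop) :
  P 0 -> (forall i r y, (i < size s)%N -> R r -> P y -> P (r * s`_i + y)) ->
  gen R s `<=` P.
Proof.
elim: s => [|a s IH] h0 hstep x; first by move=> /gen_nil ->.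
move=> /gen_cons [r [y [hr [hy ->]]]].
apply: (hstep 0%N) => //; apply: IH => //= i r' y' hi; exact: (hstep i.+1).
Qed.

Lemma gen_submod R s : subring R -> submod R (gen R s).
Proof.
move=> hR; elim: s => [|a s [IH0 [IHD IHM]]].
  split; first by apply/gen_nil.
  split; first by move=> x y /gen_nil -> /gen_nil ->; apply/gen_nil; rewrite addr0.
  by move=> r x _ /gen_nil ->; apply/gen_nil; rewrite mulr0.
split.
  by apply/gen_cons; exists 0, 0; split; [exact: subring0|split=> //]; rewrite mul0r addr0.
split.
  move=> x y /gen_cons [r [u [hr [hu ->]]]] /gen_cons [r' [u' [hr' [hu' ->]]]].
  apply/gen_cons; exists (r + r'), (u + u'); split; first exact: subringD.
  by split; [exact: IHD|rewrite mulrDl addrACA].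
move=> r x hr /gen_cons [r' [u [hr' [hu ->]]]].
apply/gen_cons; exists (r * r'), (r * u); split; first exact: subringM.
by split; [exact: IHM|rewrite mulrDr mulrA].
Qed.

Lemma gen_nth R s i : subring R -> gen R s s`_i.
Proof.
move=> hR; elim: s i => [|a s IH] i; first by rewrite nth_nil; apply/gen_nil.
apply/gen_cons; case: i => [|i] /=.
  exists 1, 0; split; first exact: subring1.
  by split; [exact: submod0 (gen_submod _ hR)|rewrite mul1r addr0].
by exists 0, s`_i; split; [exact: subring0|split=> //]; rewrite mul0r add0r.
Qed.

Lemma gen_min R M s : submod R M -> (forall i, M s`_i) -> gen R s `<=` M.
Proof.
move=> hM hs; apply: gen_ind; first exact: submod0 hM.
move=> i r y _ hr hy; exact: (submodD hM (submodM hM hr (hs i)) hy).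
Qed.

Lemma eq_gen R s t : subring R -> (forall i, s`_i = t`_i) -> gen R s = gen R t.
Proof.
move=> hR h; apply/seteqP; split; apply: gen_min; try exact: gen_submod.
  by move=> i; rewrite h; apply: gen_nth.
by move=> i; rewrite -h; apply: gen_nth.
Qed.

Lemma gen_catl R s t : subring R -> gen R s `<=` gen R (s ++ t).
Proof.
move=> hR; apply: gen_min; first exact: gen_submod.
move=> i; case: (ltnP i (size s)) => hi.
  by have := gen_nth (s ++ t) i hR; rewrite nth_cat hi.
by rewrite nth_default //; apply: submod0 (gen_submod _ hR).
Qed.

Lemma gen_catr R s t : subring R -> gen R t `<=` gen R (s ++ t).
Proof.
move=> hR; apply: gen_min; first exact: gen_submod.
move=> i; have := gen_nth (s ++ t) (size s + i) hR.
by rewrite nth_cat ltnNge leq_addr /= addKn.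
Qed.

Lemma nth_scale b s i : [seq b * x | x <- s]`_i = b * s`_i.
Proof. by elim: s i => [|a s IH] [|i] //=; rewrite ?nth_nil mulr0. Qed.

Lemma smul_gen R b s : subring R -> smul b (gen R s) = gen R [seq b * x | x <- s].
Proof.
move=> hR; have hg := gen_submod _ hR; apply/seteqP; split.
  move=> _ [y hy <-]; move: y hy; apply: gen_ind; first by rewrite mulr0; exact: submod0 (hg _).
  move=> i r y _ hr hy; rewrite mulrDr mulrCA -nth_scale.
  by apply: (submodD (hg _)) => //; apply: (submodM (hg _)) => //; exact: gen_nth.
apply: gen_min.
  split; first by exists 0; [exact: submod0 (hg _)|rewrite mulr0].
  split.
    move=> _ _ [y hy <-] [y' hy' <-]; exists (y + y'); last by rewrite mulrDr.
    exact: (submodD (hg _)).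
  move=> r _ hr [y hy <-]; exists (r * y); last by rewrite mulrCA.
  exact: (submodM (hg _)).
by move=> i; rewrite nth_scale; exists s`_i => //; apply: gen_nth.
Qed.

Lemma prodmod0 E T : prodmod E T 0.
Proof. by exists [::], [::]; do 3!split=> //; rewrite big_ord0. Qed.

Lemma prodmod_cons E T e t y : E e -> T t -> prodmod E T y -> prodmod E T (e * t + y).
Proof.
move=> he ht [es [ts [hs [hes [hts ->]]]]].
exists (e :: es), (t :: ts); split; first by rewrite /= hs.
split; first by case=> //= i; apply: hes.
split; first by case=> //= i; apply: hts.
by rewrite big_ord_recl.
Qed.

Lemma prodmod_ind E T (P : K -> Prop) :
  P 0 -> (forall e t y, E e -> T t -> P y -> P (e * t + y)) -> prodmod E T `<=` P.
Proof.
move=> h0 hs x [es [ts [hz [hes [hts ->]]]]].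
elim: es ts hz hes hts => [|e es IH] [|t ts] //= hz hes hts; first by rewrite big_ord0.
rewrite big_ord_recl /=; apply: hs; [exact: (hes 0%N)|exact: (hts 0%N)|].
by apply: IH => [|i hi|i hi]; [case: hz|exact: (hes i.+1)|exact: (hts i.+1)].
Qed.

Lemma prodmodD E T x y : prodmod E T x -> prodmod E T y -> prodmod E T (x + y).
Proof.
move=> hx hy; move: x hx; apply: prodmod_ind; first by rewrite add0r.
by move=> e t z he ht hz; rewrite -addrA; apply: prodmod_cons.
Qed.

Lemma prodmod_submod E T : subring T -> submod T (prodmod E T).
Proof.
move=> hT; split; first exact: prodmod0.
split; first exact: prodmodD.
move=> r x hr; move: x; apply: prodmod_ind; first by rewrite mulr0; apply: prodmod0.
move=> e t y he ht hy; rewrite mulrDr mulrCA.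
by apply: prodmod_cons => //; exact: subringM.
Qed.

Lemma prodmod_ext E T : T 1 -> E `<=` prodmod E T.
Proof. by move=> h1 e he; rewrite -[e]addr0 -[e]mulr1; apply: prodmod_cons => //; apply: prodmod0. Qed.

Lemma prodmod_min E T M : submod T M -> E `<=` M -> prodmod E T `<=` M.
Proof.
move=> hM hE; apply: prodmod_ind; first exact: submod0 hM.
move=> e t y he ht hy; apply: (submodD hM) => //; rewrite mulrC.
exact: (submodM hM ht (hE _ he)).
Qed.

Lemma prodmodS E E' T T' : E `<=` E' -> T `<=` T' -> prodmod E T `<=` prodmod E' T'.
Proof.
move=> hE hT; apply: prodmod_ind; first exact: prodmod0.
by move=> e t y he ht hy; apply: prodmod_cons; [apply: hE|apply: hT|].
Qed.

Lemma prodmod_sub_ring E T : subring T -> E `<=` T -> prodmod E T `<=` T.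
Proof. by move=> hT; apply: prodmod_min; exact: subring_submod. Qed.

Lemma prodmod_gen D T s : subring D -> subring T -> D `<=` T ->
  prodmod (gen D s) T = gen T s.
Proof.
move=> hD hT hDT; apply/seteqP; split.
  apply: prodmod_min; first exact: gen_submod.
  apply: gen_min; first exact: submodW (gen_submod _ hT) hDT.
  by move=> i; exact: gen_nth.
apply: gen_min; first exact: prodmod_submod.
by move=> i; apply: prodmod_ext; [exact: subring1|exact: gen_nth].
Qed.

Lemma prodmod_id D T : subring T -> D `<=` T -> D 1 -> prodmod D T = T.
Proof.
move=> hT hDT hD1; apply/seteqP; split; first exact: prodmod_sub_ring.
move=> t ht; rewrite -[t]mulr1; apply: (submodM (prodmod_submod _ hT) ht).
by apply: prodmod_ext => //; exact: subring1.
Qed.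

End Modules.

Lemma chain_bigcup_nth (T : Type) (x0 : T) (C : set (set T)) (X0 : set T) (s : seq T) :
  C X0 -> X0 x0 -> total_on C subset ->
  (forall i, (\bigcup_(X in C) X) (nth x0 s i)) -> exists2 X, C X & forall i, X (nth x0 s i).
Proof.
move=> hX0 hX0x0 htot; elim: s => [|a s IH] hs; first by exists X0 => // i; rewrite nth_nil.
have [X' hX' hX's] := IH (fun i => hs i.+1).
have [Xa hXa haX] := hs 0%N.
have [hle|hle] := htot Xa X' hXa hX'.
  by exists X' => // -[|i] //=; apply: hle.
by exists Xa => // -[|i] //=; apply: hle; apply: hX's.
Qed.

Section Star.
Variable K : fieldType.
Variables (R : set K) (st : set K -> set K).
Hypothesis hR : subring R.
Hypothesis hst : semistar R st.
Implicit Types (E F G I Q M : set K) (s : seq K).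

Local Notation sf := (star_f R st).

Lemma star_Fbar E : Fbar R E -> Fbar R (st E). Proof. exact: hst.1. Qed.
Lemma star_submod E : Fbar R E -> submod R (st E). Proof. by move=> /star_Fbar []. Qed.
Lemma starS E F : Fbar R E -> Fbar R F -> E `<=` F -> st E `<=` st F.
Proof. exact: hst.2.2.1. Qed.
Lemma star_ext E : Fbar R E -> E `<=` st E. Proof. by move=> /hst.2.2.2 []. Qed.
Lemma star_idem E : Fbar R E -> st (st E) = st E. Proof. by move=> /hst.2.2.2 []. Qed.
Lemma star_smul x E : x != 0 -> Fbar R E -> st (smul x E) = smul x (st E).
Proof. exact: hst.2.1. Qed.

Lemma Fbar_subring : Fbar R R.
Proof. by split; [exact: subring_submod|exists 1; split; [exact: oner_neq0|exact: subring1]]. Qed.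

Lemma Fbar_nz M x : submod R M -> M x -> x != 0 -> Fbar R M.
Proof. by move=> hM hx hx0; split=> //; exists x. Qed.

Lemma fg_gen s x : gen R s x -> x != 0 -> fg R (gen R s).
Proof. move=> hx hx0; split; [exact: Fbar_nz (gen_submod _ hR) hx hx0|by exists s]. Qed.

Lemma fg_Fbar G : fg R G -> Fbar R G. Proof. by case. Qed.

Lemma gen1_fg x : x != 0 -> fg R (gen R [:: x]).
Proof. by move=> hx; apply: (fg_gen (x := x)) => //; exact: (gen_nth [:: x] 0 hR). Qed.

Lemma gen1_min M x : submod R M -> M x -> gen R [:: x] `<=` M.
Proof. by move=> hM hx; apply: (gen_min hM); case=> [|[|i]]//=; apply: submod0 hM. Qed.

Lemma fg_smul b F : b != 0 -> fg R F -> fg R (smul b F).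
Proof.
move=> hb [hF [s hs]]; subst F; have [y [hy0 hy]] := hF.2.
rewrite smul_gen //; apply: (fg_gen (x := b * y)); last by rewrite mulf_neq0.
by rewrite -smul_gen //; exists y.
Qed.

Lemma fg_join E F G : submod R E -> fg R F -> fg R G -> F `<=` E -> G `<=` E ->
  exists H, [/\ fg R H, H `<=` E, F `<=` H & G `<=` H].
Proof.
move=> hE [hF [s hs]] [hG [t ht]] hFE hGE; subst F G.
have [x [hx0 hx]] := hF.2.
exists (gen R (s ++ t)); split; [| |exact: gen_catl _ hR|exact: gen_catr _ hR].
- exact: fg_gen (gen_catl t hR hx) hx0.
- apply: (gen_min hE) => i; case: (ltnP i (size s)) => hi.
    by rewrite nth_cat hi; apply: hFE; apply: gen_nth.
  by rewrite nth_cat ltnNge hi /=; apply: hGE; exact: gen_nth.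
Qed.

Lemma star_fS E F : E `<=` F -> sf E `<=` sf F.
Proof. by move=> hEF x [G [hG [hGE hx]]]; exists G; do 2!split=> //; apply: subset_trans hEF. Qed.

Lemma star_f_fg G : fg R G -> sf G = st G.
Proof.
move=> hG; apply/seteqP; split; last by move=> x hx; exists G; do 2!split=> //.
by move=> x [F [hF [hFG hx]]]; exact: (starS (fg_Fbar hF) (fg_Fbar hG) hFG).
Qed.

Lemma star_f_ext E : Fbar R E -> E `<=` sf E.
Proof.
move=> [hE [y [hy0 hy]]] x hx.
have [H [hH hHE _ hxH]] : exists H, [/\ fg R H, H `<=` E, gen R [:: y] `<=` H & gen R [:: x] `<=` H].
  case: (eqVneq x 0) => [->|hx0].
    exists (gen R [:: y]); split=> //; [exact: gen1_fg|exact: gen1_min|].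
    by apply: gen1_min; [exact: gen_submod|exact: submod0 (gen_submod _ hR)].
  by apply: fg_join => //; [exact: gen1_fg|exact: gen1_fg|exact: gen1_min|exact: gen1_min].
exists H; do 2!split=> //; apply: star_ext (fg_Fbar hH) _ _; apply: hxH.
exact: (gen_nth [:: x] 0 hR).
Qed.

Lemma star_f_submod E : Fbar R E -> submod R (sf E).
Proof.
move=> hEb; have hE := hEb.1.
split; first by apply: star_f_ext => //; exact: submod0 hE.
split.
  move=> x y [F [hF [hFE hx]]] [G [hG [hGE hy]]].
  have [H [hH hHE hFH hGH]] := fg_join hE hF hG hFE hGE.
  exists H; do 2!split=> //; apply: (submodD (star_submod (fg_Fbar hH))).
    exact: (starS (fg_Fbar hF) (fg_Fbar hH) hFH).
  exact: (starS (fg_Fbar hG) (fg_Fbar hH) hGH).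
move=> r x hr [F [hF [hFE hx]]]; exists F; do 2!split=> //.
exact: (submodM (star_submod (fg_Fbar hF))).
Qed.

Lemma star_f_finite E s : Fbar R E -> (forall i, sf E s`_i) ->
  exists G, [/\ fg R G, G `<=` E & forall i, st G s`_i].
Proof.
move=> hEb; elim: s => [|a s IH] hs.
  have [y [hy0 hy]] := hEb.2.
  exists (gen R [:: y]); split; [exact: gen1_fg|exact: gen1_min hEb.1 hy|].
  by move=> i; rewrite nth_nil; exact: submod0 (star_submod (fg_Fbar (gen1_fg hy0))).
have [G1 [hG1 hG1E hG1s]] := IH (fun i => hs i.+1).
have [G0 [hG0 [hG0E ha]]] := hs 0%N.
have [H [hH hHE h0H h1H]] := fg_join hEb.1 hG0 hG1 hG0E hG1E.
exists H; split=> //; case=> [|i] /=.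
  exact: (starS (fg_Fbar hG0) (fg_Fbar hH) h0H).
exact: (starS (fg_Fbar hG1) (fg_Fbar hH) h1H (hG1s i)).
Qed.

Lemma star_f_idem E : Fbar R E -> sf (sf E) `<=` sf E.
Proof.
move=> hEb x [F [[hFb [s hFs]] [hFE hx]]].
have hsE i : sf E s`_i by apply: hFE; rewrite hFs; exact: gen_nth.
have [G [hG hGE hGs]] := star_f_finite hEb hsE.
exists G; do 2!split=> //.
have hFG : F `<=` st G by rewrite hFs; apply: (gen_min (star_submod (fg_Fbar hG))).
by rewrite -(star_idem (fg_Fbar hG)); exact: (starS hFb (star_Fbar (fg_Fbar hG)) hFG).
Qed.

Definition qhull I := sf I `&` R.

Lemma qhull_qideal I : Fbar R I -> I `<=` R -> qideal R sf (qhull I) /\ I `<=` qhull I.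
Proof.
move=> hI hIR.
have hIq : I `<=` qhull I by move=> x hx; split; [exact: star_f_ext|exact: hIR].
have hsub : submod R (qhull I).
  by apply: submodI; [exact: star_f_submod|exact: subring_submod].
have hfb : Fbar R (qhull I) by have [y [hy0 hy]] := hI.2; exact: Fbar_nz hsub (hIq _ hy) hy0.
split=> //; split=> //; split; first by move=> x [].
apply/seteqP; split; last by move=> x hx; split; [exact: star_f_ext|case: hx].
move=> x [hx hxR]; split=> //; apply: star_f_idem hI _ _.
by apply: star_fS hx => y [].
Qed.

Lemma qideal_1 Q : qideal R sf Q -> (R `<=` Q <-> Q 1).
Proof.
move=> [hQ _]; split; first by apply; exact: subring1.
by apply: submod_1; case: hQ.
Qed.

Lemma qmax_not1 Q : qmax R sf Q -> ~ Q 1.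
Proof. by move=> [hq [hp _]] /(qideal_1 hq). Qed.

Lemma qmax_submod Q : qmax R sf Q -> submod R Q.
Proof. by move=> [[[]]]. Qed.

Lemma qmax_neq0 Q u : qmax R sf Q -> ~ Q u -> u != 0.
Proof.
move=> hQ hu; apply/eqP => hu0; apply: hu; rewrite hu0; exact: submod0 (qmax_submod hQ).
Qed.

Lemma qmax_hull_adjoin Q a : qmax R sf Q -> R a -> ~ Q a -> qhull (adjoin R Q a) 1.
Proof.
move=> hQ ha hna; have [[hQb [hQR _]] [_ hQm]] := hQ.
have hIs := adjoin_submod a hR hQb.1.
have hQI := adjoin_ext a hR (M := Q).
have [y [hy0 hy]] := hQb.2.
have [hJq hIJ] := qhull_qideal (Fbar_nz hIs (hQI _ hy) hy0) (adjoin_sub hR hQR ha).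
apply/(qideal_1 hJq) => r hr; apply: contrapT => hnr.
have hJQ : qhull (adjoin R Q a) = Q.
  by apply: hQm => //; [move=> /(_ r hr)|move=> x /hQI /hIJ].
by apply: hna; rewrite -hJQ; apply: hIJ; exact: adjoin_mem hR hQb.1.
Qed.

Lemma qmax_prime Q a b : qmax R sf Q -> R a -> R b -> Q (a * b) -> ~ Q a -> Q b.
Proof.
move=> hQ ha hb hab hna; have [[hQb [_ hQq]] _] := hQ; have hQs := hQb.1.
case: (eqVneq b 0) => [->|hb0]; first exact: submod0 hQs.
(* [b] times a finitely generated witness of [1] in the quasi-hull of [Q + R a] lies in [Q] *)
have [[F [hF [hFI h1F]]] _] := qmax_hull_adjoin hQ ha hna.
have hbF : smul b F `<=` Q.
  move=> _ [y hy <-]; have [q [r [hq [hr ->]]]] := hFI _ hy.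
  rewrite mulrDr; apply: (submodD hQs); first exact: submodM hQs hb hq.
  by rewrite mulrCA [b * a]mulrC; apply: (submodM hQs hr).
rewrite -hQq; split=> //; exists (smul b F); split; first exact: fg_smul.
split=> //; rewrite star_smul //; last exact: fg_Fbar.
by exists 1 => //; rewrite mulr1.
Qed.

Lemma bigcup_chain_qideal (C : set (set K)) X0 y0 : C X0 -> X0 y0 ->
  (forall X x, C X -> X x -> qideal R sf X /\ ~ X 1) -> total_on C subset ->
  qideal R sf (\bigcup_(X in C) X) /\ ~ (\bigcup_(X in C) X) 1.
Proof.
move=> hX0 hy0 hC htot; set U := \bigcup_(X in C) X.
have [[[hX0s hX0nz] _] _] := hC X0 y0 hX0 hy0.
have hX00 : X0 0 := submod0 hX0s.
(* [hXs (size s)] says the member [X] contains the [nth] default [0], so it is a quasi-ideal *)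
have hfin s : (forall i, U s`_i) -> exists2 X, C X & qideal R sf X /\ forall i, X s`_i.
  move=> hs; have [X hX hXs] := chain_bigcup_nth hX0 hX00 htot hs.
  exists X => //; split=> //; have [] := hC X (s`_(size s)) hX (hXs _); done.
have hUR : U `<=` R by move=> x [X hX hx]; have [[_ [hXR _]] _] := hC X x hX hx; apply: hXR.
have hUs : submod R U.
  split; first by exists X0.
  split.
    move=> x y hx hy.
    have hxy (i : nat) : U [:: x; y]`_i.
      by case: i => [|[|i]] //=; rewrite nth_nil; exists X0.
    have [X hX [[[hXs _] _] hXxy]] := hfin _ hxy.
    by exists X => //; apply: (submodD hXs (hXxy 0%N) (hXxy 1%N)).
  move=> r x hr [X hX hx]; exists X => //.
  by have [[[hXs _] _] _] := hC X x hX hx; apply: (submodM hXs).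
have hUb : Fbar R U.
  by have [y [hy0' hy]] := hX0nz; split=> //; exists y; split=> //; exists X0.
split; last by move=> [X hX hX1]; have [_] := hC X 1 hX hX1.
split=> //; split=> //; apply/seteqP; split; last first.
  by move=> x hx; split; [exact: (star_f_ext hUb)|exact: hUR].
move=> x [[F [[hFb [s hFs]] [hFU hx]]] hxR].
have hsU i : U s`_i by apply: hFU; rewrite hFs; exact: gen_nth.
have [X hX [[hXb [_ hXeq]] hXs]] := hfin _ hsU.
exists X => //; rewrite -hXeq; split=> //.
apply: (star_fS (E := F)); first by rewrite hFs; apply: (gen_min hXb.1).
by exists F; do 2!split=> //; exists s.
Qed.

Lemma exists_qmax I : Fbar R I -> I `<=` R -> ~ sf I 1 -> exists Q, qmax R sf Q /\ I `<=` Q.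
Proof.
move=> hIb hIR hI1.
have [hJq hIJ] := qhull_qideal hIb hIR.
set J := qhull I in hJq hIJ.
pose P X := X = set0 \/ [/\ qideal R sf X, ~ X 1 & J `<=` X].
have [A [hPA hAmax]] : exists A, P A /\ forall B, A `<` B -> ~ P B.
  apply: Zorn_bigcup => C hCP htot.
  have [[X0 [hX0 [y0 hy0]]]|hall] := pselect (exists X, C X /\ exists x, X x); last first.
    left; apply/seteqP; split=> // x [X hX hx].
    by apply: hall; exists X; split=> //; exists x.
  have hmem X x : C X -> X x -> [/\ qideal R sf X, ~ X 1 & J `<=` X].
    by move=> hX hx; case: (hCP X hX) => // hXe; move: hx; rewrite hXe.
  have hC X x : C X -> X x -> qideal R sf X /\ ~ X 1.
    by move=> hX hx; have [] := hmem X x hX hx.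
  have [_ _ hJX0] := hmem X0 y0 hX0 hy0.
  right; have [hUq hU1] := bigcup_chain_qideal hX0 hy0 hC htot.
  by split=> // x hx; exists X0 => //; apply: hJX0.
case: hPA => [hA0|[hAq hA1 hJA]].
  exfalso; apply: (hAmax J); last by right; split=> //; case.
  rewrite hA0; split=> // hJ; have [y [_ hy]] := hIb.2.
  exact: hJ y (hIJ _ hy).
exists A; split; last exact: subset_trans hJA.
split=> //; split; first by move/(qideal_1 hAq).
move=> I' hI'q hI'p hAI'; apply: contrapT => hne.
apply: (hAmax I'); last first.
  right; split=> //; last exact: subset_trans hAI'.
  by move/(qideal_1 hI'q).
by split=> // hI'A; apply: hne; apply/seteqP.
Qed.

Local Notation til := (stilde R st).

Lemma qmax_mul_notin Q u v : qmax R sf Q -> R u -> R v -> ~ Q u -> ~ Q v -> ~ Q (u * v).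
Proof. by move=> hQ hu hv hnu hnv /(qmax_prime hQ hu hv) /(_ hnu). Qed.

Lemma locmod_frac Q E e u : qmax R sf Q -> E e -> R u -> ~ Q u -> locmod R Q E (e / u).
Proof. by move=> hQ he hu hnu; exists e, u; do 4!split=> //; exact: qmax_neq0 hQ hnu. Qed.

Lemma qmax_avoid_fg G Q : fg R G -> G `<=` R -> st G 1 -> qmax R sf Q ->
  exists u, G u /\ ~ Q u.
Proof.
move=> hG hGR hG1 hQ; apply: contrapT => hn.
have hGQ : G `<=` Q by move=> x hx; apply: contrapT => hnx; apply: hn; exists x.
apply: (qmax_not1 hQ); have [[_ [_ <-]] _] := hQ; split; last exact: subring1.
by apply: (star_fS hGQ); rewrite star_f_fg.
Qed.

Lemma star_eqRP G : Fbar R G -> G `<=` R -> st G = st R <-> st G 1.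
Proof.
move=> hG hGR; split=> [->|hG1]; first by apply: (star_ext Fbar_subring); exact: subring1.
apply/seteqP; split; first exact: starS hG Fbar_subring hGR.
rewrite -(star_idem hG); apply: starS Fbar_subring (star_Fbar hG) _.
exact: submod_1 (star_submod hG) hG1.
Qed.

Lemma stilde_of_fg G E x : fg R G -> G `<=` R -> st G 1 ->
  (forall g, G g -> E (g * x)) -> til E x.
Proof.
move=> hG hGR hG1 hE Q hQ; have [u [hu hnu]] := qmax_avoid_fg hG hGR hG1 hQ.
rewrite -(mulKf (qmax_neq0 hQ hnu) x) mulrC.
exact: locmod_frac (hE _ hu) (hGR _ hu) hnu.
Qed.

Lemma fg_of_stilde E x : is_quotient_field R -> Fbar R E -> til E x ->
  exists G, [/\ fg R G, G `<=` R, st G 1 & forall g, G g -> E (g * x)].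
Proof.
move=> hqf hE htil; have hEs := hE.1.
pose I r := R r /\ E (r * x).
have hIs : submod R I.
  split; first by split; [exact: subring0|rewrite mul0r; exact: submod0 hEs].
  split.
    move=> a b [ha hax] [hb hbx]; split; first exact: subringD.
    by rewrite mulrDl; exact: submodD hEs hax hbx.
  move=> c a hc [ha hax]; split; first exact: subringM.
  by rewrite -mulrA; exact: submodM hEs hc hax.
(* clearing denominators of [x] and of a nonzero [e] in [E] gives a nonzero element of [I] *)
have hIb : Fbar R I.
  have [e [he0 he]] := hE.2.
  have [p [q [hp [hq [hq0 hpq]]]]] := hqf e.
  have [a [b [ha [hb [hb0 hab]]]]] := hqf x.
  have hp0 : p != 0 by apply: contraNneq he0 => hp0; rewrite hpq hp0 mul0r.
  apply: (Fbar_nz hIs (x := p * b)); last by rewrite mulf_neq0.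
  split; first exact: subringM.
  have -> : p * b * x = (q * a) * e by rewrite hab hpq; field; apply/andP.
  by apply: submodM hEs _ he; exact: subringM.
have [[F [hF [hFI hF1]]]|hn1] := pselect (sf I 1).
  by exists F; split=> // g /hFI [].
have [Q [hQ hIQ]] := exists_qmax hIb (fun r => @proj1 _ _) hn1.
have [e [u [he [hu [hnu [hu0 hx]]]]]] := htil Q hQ.
by exfalso; apply: hnu; apply: hIQ; split=> //; rewrite hx mulrC divfK.
Qed.

Lemma stilde1P G : fg R G -> G `<=` R -> til G 1 <-> st G 1.
Proof.
move=> hG hGR; split=> [htil|hG1]; last by apply: (stilde_of_fg hG hGR hG1) => g hg; rewrite mulr1.
apply: contrapT => hn.
have hn' : ~ sf G 1 by rewrite star_f_fg.
have [Q [hQ hGQ]] := exists_qmax (fg_Fbar hG) hGR hn'.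
have [g [u [hg [hu [hnu [hu0 h1]]]]]] := htil Q hQ.
by apply: hnu; rewrite -[u]mul1r h1 divfK //; apply: hGQ.
Qed.

Lemma star_eqR_stilde1 G : fg R G -> G `<=` R -> st G = st R <-> til G 1.
Proof. by move=> hG hGR; rewrite star_eqRP ?stilde1P //; exact: fg_Fbar. Qed.

Lemma stildeS E F : E `<=` F -> til E `<=` til F.
Proof.
by move=> hEF x hx Q /hx [e [u [he hrest]]]; exists e, u; split=> //; apply: hEF.
Qed.

Lemma stilde_ext E : E `<=` til E.
Proof.
by move=> e he Q hQ; rewrite -[e]divr1; apply: locmod_frac => //; [exact: subring1|exact: qmax_not1].
Qed.

Lemma stilde_eqR G : fg R G -> G `<=` R -> st G 1 -> til G = til R.
Proof.
move=> hG hGR hG1; apply/seteqP; split; first exact: stildeS.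
move=> x hx Q hQ; have [e [u [he [hu [hnu [hu0 ->]]]]]] := hx Q hQ.
have [g [hg hng]] := qmax_avoid_fg hG hGR hG1 hQ.
have -> : e / u = (g * e) / (g * u) by field; apply/andP; split=> //; exact: qmax_neq0 hQ hng.
apply: locmod_frac => //; first by rewrite mulrC; apply: (submodM (fg_Fbar hG).1).
  by apply: subringM => //; apply: hGR.
by apply: qmax_mul_notin => //; apply: hGR.
Qed.

Lemma stildeD E x y : submod R E -> til E x -> til E y -> til E (x + y).
Proof.
move=> hE hx hy Q hQ.
have [e [u [he [hu [hnu [hu0 ->]]]]]] := hx Q hQ.
have [e' [v [he' [hv [hnv [hv0 ->]]]]]] := hy Q hQ.
have -> : e / u + e' / v = (v * e + u * e') / (u * v) by field; apply/andP.
apply: locmod_frac; [done| |exact: subringM|exact: qmax_mul_notin].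
by apply: (submodD hE); apply: (submodM hE).
Qed.

Lemma stildeM E r x : submod R E -> til R r -> til E x -> til E (r * x).
Proof.
move=> hE hr hx Q hQ.
have [a [u [ha [hu [hnu [hu0 ->]]]]]] := hr Q hQ.
have [e [v [he [hv [hnv [hv0 ->]]]]]] := hx Q hQ.
have -> : a / u * (e / v) = (a * e) / (u * v) by field; apply/andP.
apply: locmod_frac; [done|exact: (submodM hE)|exact: subringM|exact: qmax_mul_notin].
Qed.

Lemma stilde_idem E : til (til E) `<=` til E.
Proof.
move=> x hx Q hQ.
have [y [v [hy [hv [hnv [hv0 ->]]]]]] := hx Q hQ.
have [e [u [he [hu [hnu [hu0 ->]]]]]] := hy Q hQ.
have -> : e / u / v = e / (u * v) by field; apply/andP.
apply: locmod_frac; [done|done|exact: subringM|exact: qmax_mul_notin].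
Qed.

Lemma stilde_subring : subring (til R).
Proof.
have hRs := subring_submod hR.
split; first by apply: stilde_ext; exact: subring1.
split; last by move=> x y; apply: stildeM.
move=> x y hx hy; apply: stildeD => //; rewrite -mulN1r; apply: stildeM => //.
by apply: stilde_ext; apply: subringN => //; exact: subring1.
Qed.

Lemma stilde_eqRP G : fg R G -> G `<=` R -> til G = til R <-> til G 1.
Proof.
move=> hG hGR; split=> [->|/(stilde1P hG hGR)]; last exact: stilde_eqR.
by apply: stilde_ext; exact: subring1.
Qed.

End Star.

Section Content.
Variable K : fieldType.
Implicit Types (R : set K) (f g : {poly K}).

Lemma content_Poly R s : subring R -> content R (Poly s) = gen R s.
Proof. by move=> hR; apply: eq_gen => // i; rewrite coef_Poly. Qed.

Lemma content0 R : content R 0 = [set 0].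
Proof. by apply/seteqP; rewrite /content polyseq0; split=> x /gen_nil. Qed.

Lemma content_fg R g : subring R -> g != 0 -> fg R (content R g).
Proof.
move=> hR hg; apply: (fg_gen hR (x := lead_coef g)); last by rewrite lead_coef_eq0.
exact: gen_nth.
Qed.

Lemma content_sub R g : subring R -> polyR R g -> content R g `<=` R.
Proof. by move=> hR hg; apply: (gen_min (subring_submod hR)). Qed.

Lemma content_mull R f g : subring R -> polyR R f -> content R (f * g) `<=` content R g.
Proof.
move=> hR hf; apply: (gen_min (gen_submod _ hR)) => i; rewrite coefM.
apply: big_ind => [|a b ha hb|j _]; first exact: submod0 (gen_submod _ hR).
  exact: submodD (gen_submod _ hR) ha hb.
by apply: (submodM (gen_submod _ hR)); [exact: hf|exact: gen_nth].
Qed.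

Lemma polyR1 R : subring R -> polyR R 1.
Proof. by move=> hR i; rewrite coef1; case: (i == 0)%N; [exact: subring1|exact: subring0]. Qed.

Lemma tofrac_inv_eq g f' g' : g != 0 -> g' != 0 ->
  (tofrac 1 / tofrac g = tofrac f' / tofrac g' :> {fraction {poly K}}) -> g' = f' * g.
Proof.
move=> hg0 hg'0 heq.
have hg : tofrac g != 0 :> {fraction {poly K}} by rewrite tofrac_eq0.
have hg' : tofrac g' != 0 :> {fraction {poly K}} by rewrite tofrac_eq0.
apply/eqP; rewrite -tofrac_eq tofracM; apply/eqP.
have := congr1 (fun w => w * (tofrac g * tofrac g')) heq.
rewrite /= tofrac1 div1r (mulKf hg) => ->.
by rewrite [tofrac g * _]mulrC mulrA (divfK hg').
Qed.

End Content.

Lemma prodmod_fg (K : fieldType) (D T G : set K) : subring D -> subring T -> D `<=` T ->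
  fg D G -> fg T (prodmod G T).
Proof.
move=> hD hT hDT [[hGs [y [hy0 hy]]] [s hs]]; subst G.
rewrite (prodmod_gen _ hD hT hDT); apply: (fg_gen hT (x := y)) => //.
by rewrite -(prodmod_gen _ hD hT hDT); apply: prodmod_ext => //; exact: subring1.
Qed.

Section Linked.
Variable K : fieldType.
Variables (D T : set K) (st st' : set K -> set K).
Hypotheses (hD : subring D) (hT : subring T) (hDT : D `<=` T).
Hypotheses (hst : semistar D st) (hst' : semistar T st').
Implicit Types (E F : set K).

Local Notation til := (stilde D st).
Local Notation til' := (stilde T st').

Let prodmodT_fg F : fg D F -> fg T (prodmod F T).
Proof. exact: prodmod_fg. Qed.

Let prodmodT_sub F : F `<=` D -> prodmod F T `<=` T.
Proof. by move=> hFD; apply: prodmod_sub_ring => // x /hFD /hDT. Qed.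

Lemma linkedE (A A' : set K -> set K) :
  (forall F, fg D F -> F `<=` D -> A F = A D <-> til F 1) ->
  (forall G, fg T G -> G `<=` T -> A' G = A' T <-> til' G 1) ->
  linked D T A A' <-> forall F, fg D F -> F `<=` D -> til F 1 -> til' (prodmod F T) 1.
Proof.
move=> hA hA'.
by split=> hl F hF hFD /(hA F hF hFD)/(hl F hF hFD)/(hA' _ (prodmodT_fg hF) (prodmodT_sub hFD)).
Qed.

Let linked_starE := linkedE (star_eqR_stilde1 hD hst) (star_eqR_stilde1 hT hst').

Lemma linked_stildeP : linked D T st st' <-> linked D T til til'.
Proof. by rewrite linked_starE (linkedE (stilde_eqRP hD hst) (stilde_eqRP hT hst')). Qed.

Lemma linked_Na : linked D T st st' -> Na D st `<=` Na T st'.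
Proof.
move=> hl _ [f [g [hf [hg [hg0 [hcg ->]]]]]].
exists f, g; split; first by move=> i; apply: hDT.
split; first by move=> i; apply: hDT.
do 2!split=> //; rewrite /content -(prodmod_gen _ hD hT hDT).
by apply: hl => //; [exact: content_fg|exact: content_sub].
Qed.

Lemma Na_linked : Na D st `<=` Na T st' -> linked D T st st'.
Proof.
move=> hNa F [hFb [s hs]] hFD hFst; subst F.
pose g := Poly s.
have hg0 : g != 0.
  apply/eqP => hg0; have [y [hy0 hy]] := hFb.2.
  by move: hy; rewrite -content_Poly // -/g hg0 content0 => hy; rewrite hy eqxx in hy0.
have hgD : polyR D g by move=> i; rewrite coef_Poly; apply: hFD; apply: gen_nth.
have hgT : polyR T g by move=> i; apply: hDT.
have [f' [g' [hf' [hg' [hg'0 [hcg' heq]]]]]] : Na T st' (tofrac 1 / tofrac g).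
  apply: hNa; exists 1, g; split; first exact: polyR1.
  by do 3!split=> //; rewrite content_Poly.
have hcgT : content T g' `<=` content T g.
  by rewrite (tofrac_inv_eq hg0 hg'0 heq); exact: content_mull hT hf'.
have hcg := content_fg hT hg0.
rewrite (prodmod_gen _ hD hT hDT) -content_Poly // -/g.
apply/(star_eqRP hT hst' (fg_Fbar hcg) (content_sub hT hgT)).
apply: (starS hst' (fg_Fbar (content_fg hT hg'0)) (fg_Fbar hcg) hcgT).
rewrite hcg'; apply: (star_ext hst' (Fbar_subring hT)); exact: subring1.
Qed.

Definition stilde_le := forall E, Fbar D E -> til E `<=` til' (prodmod E T).

Lemma linked_stilde_le : is_quotient_field D -> linked D T st st' -> stilde_le.
Proof.
move=> hqf hl E hE x /(fg_of_stilde hD hst hqf hE) [G [hG hGD hG1 hGx]].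
have hGT : st' (prodmod G T) = st' T.
  by apply: hl => //; apply/(star_eqRP hD hst (fg_Fbar hG) hGD).
apply: (stilde_of_fg hT hst' (prodmodT_fg hG) (prodmodT_sub hGD)).
  by rewrite hGT; apply: (star_ext hst' (Fbar_subring hT)); exact: subring1.
apply: prodmod_min; last by move=> g /hGx; apply: prodmod_ext; exact: subring1.
split; first by rewrite mul0r; exact: prodmod0.
split; first by move=> a b ha hb; rewrite mulrDl; exact: prodmodD.
by move=> r a hr ha; rewrite -mulrA; apply: (submodM (prodmod_submod _ hT)).
Qed.

Lemma stilde_le_linked : stilde_le -> linked D T st st'.
Proof. by move=> hle; apply/linked_starE => F hF hFD /(hle F (fg_Fbar hF)). Qed.

Lemma stilde_le_overring_linked : stilde_le ->
  overring (til D) (til' T) /\ linked (til D) (til' T) til til'.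
Proof.
move=> hle.
have hT1s := stilde_subring hT hst'.
have hDD1 : D `<=` til D by apply: stilde_ext.
have hTT1 : T `<=` til' T by apply: stilde_ext.
have hD1T1 : til D `<=` til' T.
  by rewrite -{2}(prodmod_id hT hDT (subring1 hD)); apply: hle; exact: Fbar_subring.
split=> // F hF hFD1 htilF.
have hFb : Fbar D F by have [[hFs hnz] _] := hF; split=> //; exact: submodW hFs hDD1.
have hF1 : til F 1 by rewrite htilF; apply: stilde_ext => //; apply: hDD1; exact: subring1.
have h1 : til' (prodmod F (til' T)) 1.
  by apply: (stildeS (E := prodmod F T)); [exact: prodmodS|exact: hle hFb _ hF1].
have hFT1s : submod T (prodmod F (til' T)) := submodW (prodmod_submod _ hT1s) hTT1.
apply/seteqP; split.
  by apply: stildeS; apply: prodmod_sub_ring => // y /hFD1; exact: hD1T1.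
move=> x /(stildeS (F := til' (prodmod F (til' T)))) hx; apply: (stilde_idem hT hst').
by apply: hx => t ht; rewrite -[t]mulr1; exact: (stildeM hT hst' hFT1s ht h1).
Qed.

Lemma overring_linked_linked :
  overring (til D) (til' T) /\ linked (til D) (til' T) til til' -> linked D T st st'.
Proof.
move=> [[_ hD1T1] hl]; apply/linked_starE => F hF hFD hF1.
have hD1s := stilde_subring hD hst.
have hDD1 : D `<=` til D by apply: stilde_ext.
have hTT1 : T `<=` til' T by apply: stilde_ext.
pose F1 := prodmod F (til D).
have hF1D1 : F1 `<=` til D by apply: prodmod_sub_ring => // y /hFD; exact: hDD1.
have hF1til : til F1 = til (til D).
  apply/seteqP; split; first exact: stildeS.
  move=> x /(stilde_idem hD hst); rewrite -(stilde_eqR hD hst hF hFD).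
    by apply: stildeS; apply: prodmod_ext; apply: hDD1; exact: subring1.
  exact/(stilde1P hD hst hF hFD).
have hlk := hl F1 (prodmod_fg hD hD1s hDD1 hF) hF1D1 hF1til.
pose N := til' (prodmod F T).
have hNs : submod (til' T) N.
  split; first by apply: (stilde_ext hT); exact: prodmod0.
  split; first by move=> a b; apply: (stildeD hT hst'); exact: prodmod_submod.
  by move=> r a hr ha; apply: (stildeM hT hst') => //; exact: prodmod_submod.
have hFN : F `<=` N by move=> y hy; apply: (stilde_ext hT); apply: prodmod_ext hy; exact: subring1.
have hPN : prodmod F1 (til' T) `<=` N.
  by apply: prodmod_min => //; apply: prodmod_min => //; exact: submodW hNs hD1T1.
apply: (stilde_idem hT hst'); apply: (stildeS hPN).
by rewrite hlk; apply: (stilde_ext hT); apply: hTT1; exact: subring1.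
Qed.

End Linked.

Theorem theorem3p8 (K : fieldType) (D T : set K) (st st' : set K -> set K) :
  subring D -> is_quotient_field D -> overring D T ->
  semistar D st -> semistar T st' ->
  [<-> linked D T st st';
       Na D st `<=` Na T st';
       (forall E, Fbar D E -> stilde D st E `<=` stilde T st' (prodmod E T));
       linked D T (stilde D st) (stilde T st');
       overring (stilde D st D) (stilde T st' T) /\
       linked (stilde D st D) (stilde T st' T) (stilde D st) (stilde T st')].
Proof.
move=> hD hqf [hT hDT] hst hst'.
have hlink := linked_stildeP hD hT hDT hst hst'.
tfae.
- by apply: linked_Na.
- by move=> hNa; apply: linked_stilde_le => //; apply: Na_linked.
- by move=> hle; apply/hlink; apply: stilde_le_linked.
- by move=> /hlink hl; apply: stilde_le_overring_linked => //; apply: linked_stilde_le.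
- by apply: overring_linked_linked.
Qed.
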